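(* For any $\theta=(B,\Omega)$ and $\psi_i=(m_i,s_i)$, the inverse of the Hessian of $J_i$ with respect to $\psi_i$ is $(\nabla_{\psi_i\psi_i}J_i)^{-1}(\theta,\psi_i)=-\begin{pmatrix}D_{\tilde a_i}^{-1/2}&\\&D_{\tilde a_i}^{-1/2}\end{pmatrix}\begin{pmatrix}C_i&-C_iD_{s_i}\Lambda_i\\-\Lambda_iD_{s_i}C_i&\Lambda_i+\Lambda_iD_{s_i}C_iD_{s_i}\Lambda_i\end{pmatrix}\begin{pmatrix}D_{\tilde a_i}^{-1/2}&\\&D_{\tilde a_i}^{-1/2}\end{pmatrix}$, where $\Lambda_i=\big(I_p+D_{s_i}^2(D_{\tilde a_i}+D_{\tilde a_i}D_{s_i}^2+\Omega_D)\big)^{-1}D_{\tilde a_i}D_{s_i}^2$ and $C_i=\big(I_p+D_{\tilde a_i}^{-1/2}\Omega D_{\tilde a_i}^{-1/2}-D_{s_i}\Lambda_iD_{s_i}\big)^{-1}$.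
   Context: PLN model, observation $i$ with counts $Y_i\in\mathbb N^p$, covariate $x_i\in\mathbb R^m$, offset $o_i\in\mathbb R^p$; $B\in\mathcal M_{m,p}(\mathbb R)$ (columns $B_j$), $\Omega$ symmetric positive definite. Variational parameter $\psi_i=(m_i,s_i)\in\mathbb R^p\times(0,\infty)^p$ (ordered as $(m_i,s_i)$ in the Hessian). Single-observation ELBO: $J_i(\theta,\psi_i)=Y_i^\top(o_i+m_i+B^\top x_i)-\tilde a_i^\top1_p-\sum_j\log(Y_{ij}!)+\frac12\log|\Omega|-\frac12m_i^\top\Omega m_i-\frac12\mathrm{diag}(\Omega)^\top s_i^2+\sum_j\log s_{ij}+\frac p2$, $\tilde a_{ij}=\exp(o_{ij}+x_i^\top B_j+m_{ij}+s_{ij}^2/2)$. Notation: $D_v=\mathrm{Diag}(v)$, $\Omega_D=I_p\odot\Omega$ (diagonal part of $\Omega$). *)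

From HB Require Import structures.
From mathcomp Require Import all_boot all_order all_algebra.
From mathcomp Require Import all_classical all_reals all_analysis.
Set Implicit Arguments. Unset Strict Implicit. Unset Printing Implicit Defensive.
Import Order.TTheory GRing.Theory Num.Theory.
Import numFieldNormedType.Exports.
Local Open Scope ring_scope.

Definition hessian (R : realType) (n : nat) (f : 'rV[R]_n -> R) (x : 'rV[R]_n)
  : 'M[R]_n :=
  \matrix_(k, l) derive (fun y => derive f y (delta_mx 0 l)) x (delta_mx 0 k).

(* tilde a_i as a row vector, given m_i and s_i. The covariate x_i is a row
   vector of size d, so (x *m B) 0 j = x_i^T B_j. *)
Definition atilde (R : realType) (p d : nat) (x : 'rV[R]_d) (o : 'rV[R]_p)
  (B : 'M[R]_(d, p)) (mi si : 'rV[R]_p) : 'rV[R]_p :=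
  \row_j expR (o 0 j + (x *m B) 0 j + mi 0 j + si 0 j ^+ 2 / 2).

(* Single-observation ELBO J_i(theta, psi_i), psi_i = (m_i, s_i) stored as
   row_mx m_i s_i. *)
Definition elbo_i (R : realType) (p d : nat) (Y : 'I_p -> nat) (x : 'rV[R]_d)
  (o : 'rV[R]_p) (B : 'M[R]_(d, p)) (Om : 'M[R]_p) (psi : 'rV[R]_(p + p)) : R :=
  let mi := lsubmx psi in
  let si := rsubmx psi in
  let a := atilde x o B mi si in
  \sum_(j < p) (Y j)%:R * (o 0 j + mi 0 j + (x *m B) 0 j)
  - \sum_(j < p) a 0 j
  - \sum_(j < p) ln ((Y j)`!%:R)
  + ln (\det Om) / 2
  - (mi *m Om *m mi^T) 0 0 / 2
  - \sum_(j < p) Om j j * si 0 j ^+ 2 / 2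
  + \sum_(j < p) ln (si 0 j)
  + p%:R / 2.

Definition sym_pos_def (R : realType) (p : nat) (Om : 'M[R]_p) : Prop :=
  Om^T = Om /\ forall v : 'rV[R]_p, v != 0 -> 0 < (v *m Om *m v^T) 0 0.

From HB Require Import structures.
From mathcomp Require Import all_boot all_order all_algebra.
From mathcomp Require Import all_classical all_reals all_analysis.
From mathcomp Require Import ring lra.
Import Order.TTheory GRing.Theory Num.Theory.
Import numFieldNormedType.Exports.
Local Open Scope ring_scope.

(* The Hessian of [J_i] in [psi_i = (m_i, s_i)] is computed coordinatewise:
   it is [- [[D_a + Om, D_a D_s], [D_a D_s, D_a + D_a D_s^2 + Om_D + D_s^-2]]].
   With [E = diag(D_a^(1/2), D_a^(1/2))] this matrix is [- E M E], where
   [M = [[I + D_a^(-1/2) Om D_a^(-1/2), D_s], [D_s, Lam^-1]]] and [Lam] is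
   diagonal.  Inverting [M] blockwise through the Schur complement of [Lam^-1]
   gives the stated formula; that complement is [D_a^(-1/2) Om D_a^(-1/2)] plus a
   diagonal matrix with positive entries, hence invertible because [Om] is
   positive definite. *)

Section DirectionalDerivatives.
Context {R : realType} {V : normedModType R}.
Implicit Types (f g : V -> R) (a v : V).

Lemma is_derive1P f a v df :
  is_derive a v f df <-> is_derive (0 : R) 1 (fun t : R => f (t *: v + a)) df.
Proof.
have quotE : (fun h : R => h^-1 *: ((f \o shift a) (h *: v) - f a)) =
  (fun h : R => h^-1 *:
     (((fun t : R => f (t *: v + a)) \o shift 0) (h *: 1) - f (0 *: v + a))).
  by apply: funext => h /=; rewrite addr0 scale0r add0r [h *: 1]mulr1.
by split=> -[df_ex <-]; apply: DeriveDef;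
  rewrite /derivable /derive ?quotE -?quotE in df_ex *.
Qed.

Lemma is_derive_comp f (g : R -> R) a v df dg :
  is_derive a v f df -> is_derive (f a) 1 g dg ->
  is_derive a v (fun y => g (f y)) (dg * df).
Proof.
move=> /is_derive1P fdf gdg; apply/is_derive1P.
apply: (is_derive1_comp _ fdf).
by rewrite /= scale0r add0r.
Qed.

(* Pointwise forms of [is_deriveD], [is_deriveB] and [is_deriveM], which are
   stated for [f + g] and [f * g] and hence do not unify with [fun y => ...]. *)
Lemma is_derive_add {f g a v df dg} :
  is_derive a v f df -> is_derive a v g dg ->
  is_derive a v (fun y => f y + g y) (df + dg).
Proof. exact: is_deriveD. Qed.

Lemma is_derive_sub {f g a v df dg} :
  is_derive a v f df -> is_derive a v g dg ->
  is_derive a v (fun y => f y - g y) (df - dg).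
Proof. exact: is_deriveB. Qed.

Lemma is_derive_mul {f g a v df dg} :
  is_derive a v f df -> is_derive a v g dg ->
  is_derive a v (fun y => f y * g y) (f a * dg + g a * df).
Proof. exact: is_deriveM. Qed.

Lemma is_derive_sum_fun n (h : 'I_n -> V -> R) a v dh :
  (forall i, is_derive a v (h i) (dh i)) ->
  is_derive a v (fun y => \sum_(i < n) h i y) (\sum_(i < n) dh i).
Proof. by move=> /is_derive_sum; rewrite fct_sumE. Qed.

Lemma is_derive_half_sqr f a v df : is_derive a v f df ->
  is_derive a v (fun y => f y ^+ 2 / 2) (f a * df).
Proof.
move=> fdf; rewrite (_ : (fun y => _) = fun y => f y * f y * 2^-1); last first.
  by apply: funext => y; rewrite expr2.
eapply is_derive_eq.
  exact: is_derive_mul.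
by rewrite /= -[f a *: df]/(f a * df); field.
Qed.

Lemma is_derive_ln f a v df : 0 < f a -> is_derive a v f df ->
  is_derive a v (fun y => ln (f y)) (df / f a).
Proof.
move=> fa_gt0 fdf; rewrite mulrC.
exact: is_derive_comp fdf (is_derive1_ln fa_gt0).
Qed.

Lemma is_derive_inv f a v df : f a != 0 -> is_derive a v f df ->
  is_derive a v (fun y => (f y)^-1) (- (f a ^+ 2)^-1 * df).
Proof.
move=> fa_neq0 fdf.
have inv_der := is_deriveV fa_neq0 (is_derive_id (f a) (1 : R)).
apply: is_derive_eq (@is_derive_comp _ GRing.inv _ _ _ _ fdf inv_der) _.
by rewrite [_ *: 1]mulr1.
Qed.

End DirectionalDerivatives.

Section BilinearForms.
Context {R : comPzRingType}.

Lemma mx_formE {n} (u v : 'rV[R]_n) (M : 'M[R]_n) :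
  (u *m M *m v^T) 0 0 = \sum_j (\sum_i u 0 i * M i j) * v 0 j.
Proof. by rewrite mxE; apply: eq_bigr => j _; rewrite !mxE. Qed.

Lemma diag_formE {n} (u v c : 'rV[R]_n) :
  (u *m diag_mx c *m v^T) 0 0 = \sum_j u 0 j * c 0 j * v 0 j.
Proof. by rewrite mxE; apply: eq_bigr => j _; rewrite mul_mx_diag !mxE. Qed.

Lemma diag_row_formE {n} (u v : 'rV[R]_n) (c : 'I_n -> R) :
  (u *m diag_mx (\row_j c j) *m v^T) 0 0 = \sum_j u 0 j * c j * v 0 j.
Proof. by rewrite diag_formE; apply: eq_bigr => j _; rewrite mxE. Qed.

Lemma mx_form_sym {n} (u v : 'rV[R]_n) (M : 'M[R]_n) : M^T = M ->
  (u *m M *m v^T) 0 0 = (v *m M *m u^T) 0 0.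
Proof.
move=> M_sym; rewrite -!trace_mx11 -mxtrace_tr.
by rewrite !trmx_mul trmxK M_sym mulmxA.
Qed.

Lemma block_formE {m n} (u v : 'rV[R]_(m + n)) (A : 'M[R]_m) (B : 'M[R]_(m, n))
    (C : 'M[R]_(n, m)) (D : 'M[R]_n) :
  (u *m block_mx A B C D *m v^T) 0 0 =
    (lsubmx u *m A *m (lsubmx v)^T) 0 0 + (lsubmx u *m B *m (rsubmx v)^T) 0 0
  + (rsubmx u *m C *m (lsubmx v)^T) 0 0 + (rsubmx u *m D *m (rsubmx v)^T) 0 0.
Proof.
rewrite -{1}[u]hsubmxK -{1}[v]hsubmxK mul_row_block tr_row_mx mul_row_col.
rewrite !mulmxDl [LHS]mxE [X in X + _ = _]mxE [X in _ + X = _]mxE.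
by rewrite addrACA !addrA.
Qed.

End BilinearForms.

Lemma diag_mxM {R : pzRingType} {n} (u v : 'rV[R]_n) :
  diag_mx u *m diag_mx v = diag_mx (\row_j (u 0 j * v 0 j)).
Proof. by apply/matrixP => i j; rewrite mul_diag_mx !mxE mulrnAr. Qed.

Lemma mulmx1_invmx {R : comUnitRingType} {n} (A B : 'M[R]_n) :
  A *m B = 1%:M -> invmx A = B.
Proof.
by move=> AB1; have [uA _] := mulmx1_unit AB1; rewrite -[B](mulKmx uA) AB1 mulmx1.
Qed.

Lemma invmx_diag {R : fieldType} {n} (u : 'rV[R]_n) : (forall j, u 0 j != 0) ->
  invmx (diag_mx u) = diag_mx (\row_j (u 0 j)^-1).
Proof.
move=> u_neq0; apply: mulmx1_invmx.
rewrite diag_mxM -diag_const_mx; congr diag_mx.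
by apply/rowP => j; rewrite !mxE mulfV.
Qed.

Lemma mulmx_block_schur {R : pzRingType} {m n} (A : 'M[R]_m) (B : 'M[R]_(m, n))
    (C : 'M[R]_(n, m)) (D Dinv : 'M[R]_n) (Sinv : 'M[R]_m) :
  D *m Dinv = 1%:M -> (A - B *m Dinv *m C) *m Sinv = 1%:M ->
  block_mx A B C D *m
    block_mx Sinv (- (Sinv *m B *m Dinv)) (- (Dinv *m C *m Sinv))
             (Dinv + Dinv *m C *m Sinv *m B *m Dinv) = 1%:M.
Proof.
move=> DDinv SSinv.
have ASinv : A *m Sinv = 1%:M + B *m Dinv *m C *m Sinv.
  by rewrite -SSinv mulmxBl subrK.
rewrite mulmx_block (scalar_mx_block m n 1); congr block_mx.
- by rewrite mulmxN !mulmxA -mulmxBl.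
- by rewrite mulmxN mulmxDr !mulmxA ASinv !mulmxDl mul1mx addNr.
- by rewrite mulmxN !mulmxA DDinv mul1mx subrr.
- by rewrite mulmxN mulmxDr !mulmxA DDinv !mul1mx addrCA addNr addr0.
Qed.

Lemma psd_add_diag_unitmx {R : realFieldType} {n} (S : 'M[R]_n) (c : 'rV[R]_n) :
  (forall v : 'rV[R]_n, 0 <= (v *m S *m v^T) 0 0) -> (forall j, 0 < c 0 j) ->
  S + diag_mx c \in unitmx.
Proof.
move=> S_psd c_gt0; rewrite unitmxE unitfE.
apply/negP => /det0P [v v_neq0 vSc0].
have vcv_ge0 j : 0 <= v 0 j * c 0 j * v 0 j.
  by rewrite mulrAC -expr2 mulr_ge0 ?sqr_ge0 ?ltW.
have : (v *m (S + diag_mx c) *m v^T) 0 0 = 0 by rewrite vSc0 mul0mx mxE.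
rewrite mulmxDr mulmxDl [LHS]mxE diag_formE => form0.
have diag0 : \sum_j v 0 j * c 0 j * v 0 j = 0.
  by apply/eqP; rewrite eq_le sumr_ge0 // andbT; have := S_psd v; lra.
apply/negP: v_neq0; rewrite negbK; apply/eqP/rowP => j; rewrite mxE.
have /(_ j isT)/eqP := psumr_eq0P (fun j _ => vcv_ge0 j) diag0.
by rewrite mulrAC -expr2 mulf_eq0 sqrf_eq0 (gt_eqF (c_gt0 j)) orbF => /eqP.
Qed.

Lemma sym_pos_def_diag_gt0 {R : realType} {n} {Om : 'M[R]_n} :
  sym_pos_def Om -> forall j, 0 < Om j j.
Proof.
case=> _ Om_pos j; have := Om_pos (delta_mx 0 j).
rewrite -rowE trmx_delta -colE !mxE; apply.
apply/negP => /eqP/matrixP/(_ 0 j).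
by rewrite !mxE !eqxx /= => /eqP; rewrite oner_eq0.
Qed.

Section RowVectorCalculus.
Context {R : realType}.

Lemma is_derive_coord {n} (c : 'I_n) (a v : 'rV[R]_n) :
  is_derive a v (fun y => y 0 c) (v 0 c).
Proof.
apply/is_derive1P.
rewrite (_ : (fun t => _) = (fun t : R => t * v 0 c + a 0 c)); last first.
  by apply: funext => t; rewrite !mxE.
eapply is_derive_eq.
  apply: is_derive_add.
by rewrite /= scaler0 add0r addr0 [_%:A]mulr1.
Qed.

Lemma is_derive_lsubmx {m n} (j : 'I_m) (a v : 'rV[R]_(m + n)) :
  is_derive a v (fun y => lsubmx y 0 j) (lsubmx v 0 j).
Proof.
rewrite mxE (_ : (fun y => _) = fun y : 'rV[R]_(m + n) => y 0 (lshift n j)).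
  exact: is_derive_coord.
by apply: funext => y; rewrite mxE.
Qed.

Lemma is_derive_rsubmx {m n} (j : 'I_n) (a v : 'rV[R]_(m + n)) :
  is_derive a v (fun y => rsubmx y 0 j) (rsubmx v 0 j).
Proof.
rewrite mxE (_ : (fun y => _) = fun y : 'rV[R]_(m + n) => y 0 (rshift m j)).
  exact: is_derive_coord.
by apply: funext => y; rewrite mxE.
Qed.

Lemma near_coord_gt0 {n} {c : 'I_n} {a : 'rV[R]_n} :
  0 < a 0 c -> \forall y \near a, 0 < (y : 'rV[R]_n) 0 c.
Proof. exact: (cvgr_gt _ (@coord_continuous R 1 n 0 c a)). Qed.

Lemma hessian_mx {n} (f : 'rV[R]_n -> R) (a : 'rV[R]_n)
    (Df : 'rV[R]_n -> 'rV[R]_n -> R) (M : 'M[R]_n) :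
  (\forall y \near a, forall v, is_derive y v f (Df y v)) ->
  (forall v w, is_derive a w (fun y => Df y v) ((w *m M *m v^T) 0 0)) ->
  hessian f a = M.
Proof.
move=> Df_near D2f; apply/matrixP => k l; rewrite mxE.
have -> : 'D_(delta_mx 0 k) (fun y => 'D_(delta_mx 0 l) f y) a =
          'D_(delta_mx 0 k) (fun y => Df y (delta_mx 0 l)) a.
  by apply: near_eq_derive; apply: filterS Df_near => y /(_ (delta_mx 0 l)) [].
have [_ ->] := D2f (delta_mx 0 l) (delta_mx 0 k).
by rewrite -rowE trmx_delta -colE !mxE.
Qed.

End RowVectorCalculus.

Ltac derive_tac := repeat first
  [ exact: is_derive_lsubmx | exact: is_derive_rsubmx | exact: is_derive_cst
  | apply: is_derive_half_sqr | apply: is_derive_sum_fun => ?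
  | apply: is_derive_add | apply: is_derive_sub | apply: is_derive_mul ].

Section LsubmxForms.
Context {R : realType}.

Lemma is_derive_lsubmx_form {m n} (M : 'M[R]_m) (u : 'rV[R]_m)
    (a v : 'rV[R]_(m + n)) :
  is_derive a v (fun y => (lsubmx y *m M *m u^T) 0 0)
    ((lsubmx v *m M *m u^T) 0 0).
Proof.
rewrite mx_formE (_ : (fun y => _) =
    fun y => \sum_j (\sum_i lsubmx y 0 i * M i j) * u 0 j); last first.
  by apply: funext => y; rewrite mx_formE.
eapply is_derive_eq; first by derive_tac.
rewrite /=; apply: eq_bigr => j _; rewrite mulr0 add0r mulrC; congr (_ * _).
by apply: eq_bigr => i _; rewrite mulr0 add0r mulrC.
Qed.

Lemma is_derive_lsubmx_quad {m n} (M : 'M[R]_m) (a v : 'rV[R]_(m + n)) :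
  is_derive a v (fun y => (lsubmx y *m M *m (lsubmx y)^T) 0 0)
    ((lsubmx v *m M *m (lsubmx a)^T) 0 0 + (lsubmx a *m M *m (lsubmx v)^T) 0 0).
Proof.
rewrite (_ : (fun y => _) =
    fun y => \sum_j (\sum_i lsubmx y 0 i * M i j) * lsubmx y 0 j); last first.
  by apply: funext => y; rewrite mx_formE.
eapply is_derive_eq; first by derive_tac.
rewrite !mx_formE -big_split /=; apply: eq_bigr => j _.
rewrite addrC mulrC; congr (_ * _ + _).
rewrite mulrC; congr (_ * _); apply: eq_bigr => i _.
by rewrite mulr0 add0r mulrC.
Qed.

End LsubmxForms.

Definition pln_hessian {R : fieldType} {p} (a s : 'rV[R]_p) (Om : 'M[R]_p) :
    'M[R]_(p + p) :=
  - block_mx (diag_mx a + Om) (diag_mx (\row_j (a 0 j * s 0 j)))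
             (diag_mx (\row_j (a 0 j * s 0 j)))
             (diag_mx (\row_j (a 0 j + a 0 j * s 0 j ^+ 2 + Om j j
                               + (s 0 j ^+ 2)^-1))).

Section ElboDerivatives.
Variables (R : realType) (p d : nat) (Y : 'I_p -> nat) (x : 'rV[R]_d)
  (o : 'rV[R]_p) (B : 'M[R]_(d, p)) (Om : 'M[R]_p).
Implicit Types a v w y : 'rV[R]_(p + p).

Local Notation atil y := (atilde x o B (lsubmx y) (rsubmx y)).

Lemma is_derive_atilde j a v :
  is_derive a v (fun y => atil y 0 j)
    (atil a 0 j * (lsubmx v 0 j + rsubmx a 0 j * rsubmx v 0 j)).
Proof.
rewrite (_ : (fun y => _) = fun y =>
    expR (o 0 j + (x *m B) 0 j + lsubmx y 0 j + rsubmx y 0 j ^+ 2 / 2));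
  last by apply: funext => y; rewrite /atilde mxE.
rewrite /atilde mxE; apply: is_derive_comp _ (is_derive_expR _).
by eapply is_derive_eq; [derive_tac | rewrite /=; ring].
Qed.

Definition elbo_deriv a v :=
  \sum_j (Y j)%:R * lsubmx v 0 j
  - \sum_j atil a 0 j * (lsubmx v 0 j + rsubmx a 0 j * rsubmx v 0 j)
  - (lsubmx a *m Om *m (lsubmx v)^T) 0 0
  - \sum_j Om j j * (rsubmx a 0 j * rsubmx v 0 j)
  + \sum_j rsubmx v 0 j / rsubmx a 0 j.

Lemma is_derive_elbo_i a v : Om^T = Om -> (forall j, 0 < rsubmx a 0 j) ->
  is_derive a v (elbo_i Y x o B Om) (elbo_deriv a v).
Proof.
move=> Om_sym s_gt0; rewrite /elbo_i.
have data_der : is_derive a v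
    (fun y => \sum_j (Y j)%:R * (o 0 j + lsubmx y 0 j + (x *m B) 0 j))
    (\sum_j (Y j)%:R * lsubmx v 0 j).
  apply: is_derive_sum_fun => j.
  by eapply is_derive_eq; [derive_tac | rewrite /=; ring].
have atilde_der : is_derive a v (fun y => \sum_j atil y 0 j)
    (\sum_j atil a 0 j * (lsubmx v 0 j + rsubmx a 0 j * rsubmx v 0 j)).
  by apply: is_derive_sum_fun => j; exact: is_derive_atilde.
have quad_der : is_derive a v (fun y => (lsubmx y *m Om *m (lsubmx y)^T) 0 0 / 2)
    ((lsubmx a *m Om *m (lsubmx v)^T) 0 0).
  eapply is_derive_eq.
    by apply: is_derive_mul; exact: is_derive_lsubmx_quad.
  by rewrite /= (mx_form_sym (lsubmx v) _ _ Om_sym); field.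
have sqr_der : is_derive a v (fun y => \sum_j Om j j * rsubmx y 0 j ^+ 2 / 2)
    (\sum_j Om j j * (rsubmx a 0 j * rsubmx v 0 j)).
  apply: is_derive_sum_fun => j; eapply is_derive_eq; first by derive_tac.
  by rewrite /=; field.
have ln_der : is_derive a v (fun y => \sum_j ln (rsubmx y 0 j))
    (\sum_j rsubmx v 0 j / rsubmx a 0 j).
  apply: is_derive_sum_fun => j.
  by apply: is_derive_ln; [exact: s_gt0 | exact: is_derive_rsubmx].
have cst_der (c : R) : is_derive a v (fun=> c) 0 := is_derive_cst c a v.
have := is_derive_add (is_derive_add (is_derive_sub (is_derive_sub (is_derive_add
  (is_derive_sub (is_derive_sub data_der atilde_der) (cst_der _)) (cst_der _))
  quad_der) sqr_der) ln_der) (cst_der _).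
move=> elbo_der; apply: is_derive_eq (elbo_der _ _ _) _.
by rewrite /elbo_deriv; ring.
Qed.

Definition elbo_deriv2 a v w :=
  - \sum_j atil a 0 j * (rsubmx v 0 j * rsubmx w 0 j
      + (lsubmx v 0 j + rsubmx a 0 j * rsubmx v 0 j)
        * (lsubmx w 0 j + rsubmx a 0 j * rsubmx w 0 j))
  - (lsubmx w *m Om *m (lsubmx v)^T) 0 0
  - \sum_j Om j j * (rsubmx w 0 j * rsubmx v 0 j)
  - \sum_j rsubmx v 0 j * rsubmx w 0 j / rsubmx a 0 j ^+ 2.

Lemma is_derive_elbo_deriv a v w : (forall j, 0 < rsubmx a 0 j) ->
  is_derive a w (fun y => elbo_deriv y v) (elbo_deriv2 a v w).
Proof.
move=> s_gt0.
have atilde_der : is_derive a w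
    (fun y => \sum_j atil y 0 j * (lsubmx v 0 j + rsubmx y 0 j * rsubmx v 0 j))
    (\sum_j atil a 0 j * (rsubmx v 0 j * rsubmx w 0 j
      + (lsubmx v 0 j + rsubmx a 0 j * rsubmx v 0 j)
        * (lsubmx w 0 j + rsubmx a 0 j * rsubmx w 0 j))).
  apply: is_derive_sum_fun => j; eapply is_derive_eq.
    by apply: is_derive_mul; [exact: is_derive_atilde | derive_tac].
  by rewrite /=; ring.
have quad_der := is_derive_lsubmx_form Om (lsubmx v) a w.
have sqr_der : is_derive a w
    (fun y => \sum_j Om j j * (rsubmx y 0 j * rsubmx v 0 j))
    (\sum_j Om j j * (rsubmx w 0 j * rsubmx v 0 j)).
  apply: is_derive_sum_fun => j; eapply is_derive_eq; first by derive_tac.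
  by rewrite /=; ring.
have inv_der : is_derive a w (fun y => \sum_j rsubmx v 0 j / rsubmx y 0 j)
    (- \sum_j rsubmx v 0 j * rsubmx w 0 j / rsubmx a 0 j ^+ 2).
  rewrite -sumrN; apply: is_derive_sum_fun => j; eapply is_derive_eq.
    apply: is_derive_mul.
    by apply: is_derive_inv; [exact: lt0r_neq0 | exact: is_derive_rsubmx].
  by rewrite /=; ring.
have cst_der (c : R) : is_derive a w (fun=> c) 0 := is_derive_cst c a w.
have := is_derive_add (is_derive_sub (is_derive_sub (is_derive_sub
  (cst_der _) atilde_der) quad_der) sqr_der) inv_der.
move=> der; apply: is_derive_eq (der _) _.
by rewrite /elbo_deriv2; ring.
Qed.

Lemma elbo_deriv2E a v w :
  elbo_deriv2 a v w = (w *m pln_hessian (atil a) (rsubmx a) Om *m v^T) 0 0.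
Proof.
rewrite /elbo_deriv2 /pln_hessian mulmxN mulNmx [RHS]mxE block_formE.
rewrite mulmxDr mulmxDl [(_ + _ : 'M[R]_1) 0 0]mxE diag_formE !diag_row_formE.
rewrite -!opprD; congr (- _); set Q := (lsubmx w *m Om *m _) 0 0.
rewrite (addrC _ Q) (addrC _ Q) -!addrA; congr (Q + _).
by rewrite !addrA -!big_split; apply: eq_bigr => j _ /=; ring.
Qed.

Lemma hessian_elbo_i z : Om^T = Om -> (forall j, 0 < rsubmx z 0 j) ->
  hessian (elbo_i Y x o B Om) z = pln_hessian (atil z) (rsubmx z) Om.
Proof.
move=> Om_sym s_gt0; apply: (hessian_mx _ _ elbo_deriv).
  have s_near_gt0 : \forall y \near z, forall j, 0 < rsubmx y 0 j.
    apply: (@filter_forall _ _ (fun j (y : 'rV[R]_(p + p)) => 0 < rsubmx y 0 j)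
      (nbhs z) _) => j.
    have zj_gt0 : 0 < z 0 (rshift p j) by have := s_gt0 j; rewrite mxE.
    by apply: filterS (near_coord_gt0 zj_gt0) => y; rewrite mxE.
  by apply: filterS s_near_gt0 => y y_gt0 v; exact: is_derive_elbo_i.
by move=> v w; rewrite -elbo_deriv2E; exact: is_derive_elbo_deriv.
Qed.

End ElboDerivatives.

Section PLNHessianInverse.
Variables (R : realType) (p : nat) (Om : 'M[R]_p) (a s : 'rV[R]_p).
Hypotheses (Om_pd : sym_pos_def Om) (a_gt0 : forall j, 0 < a 0 j)
  (s_gt0 : forall j, 0 < s 0 j).

Local Notation Da := (diag_mx a).
Local Notation Ds := (diag_mx s).
Local Notation Dh := (diag_mx (\row_j (Num.sqrt (a 0 j))^-1)).
Local Notation Dr := (diag_mx (\row_j Num.sqrt (a 0 j))).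
Local Notation OmD := (diag_mx (\row_j Om j j)).
Local Notation Lam := (invmx (1%:M + Ds *m Ds *m (Da + Da *m Ds *m Ds + OmD))
                       *m Da *m Ds *m Ds).
Local Notation q j := (1 + s 0 j ^+ 2 * (a 0 j + a 0 j * s 0 j ^+ 2 + Om j j)).
Local Notation lam j := (a 0 j * s 0 j ^+ 2 / q j).

Lemma Lambda_den_gt0 j : 0 < q j.
Proof.
have := a_gt0 j; have := s_gt0 j; have := sym_pos_def_diag_gt0 Om_pd j.
by move=> *; rewrite ltr_pwDl ?mulr_ge0 ?addr_ge0 ?ltW ?mulr_gt0 ?exprn_gt0.
Qed.

Lemma Lambda_diag : Lam = diag_mx (\row_j lam j).
Proof.
have -> : 1%:M + Ds *m Ds *m (Da + Da *m Ds *m Ds + OmD) = diag_mx (\row_j q j).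
  rewrite -diag_const_mx !diag_mxM -!raddfD !diag_mxM -raddfD.
  by congr diag_mx; apply/rowP => j; rewrite !mxE; ring.
rewrite invmx_diag => [|j]; last by rewrite mxE lt0r_neq0 ?Lambda_den_gt0.
rewrite !diag_mxM; congr diag_mx; apply/rowP => j; rewrite !mxE.
by ring.
Qed.

Lemma schur_unitmx : 1%:M + Dh *m Om *m Dh - Ds *m Lam *m Ds \in unitmx.
Proof.
have -> : 1%:M + Dh *m Om *m Dh - Ds *m Lam *m Ds =
    Dh *m Om *m Dh + diag_mx (\row_j (1 - s 0 j ^+ 2 * lam j)).
  rewrite Lambda_diag !diag_mxM -diag_const_mx addrAC addrC -raddfB.
  by congr (_ + diag_mx _); apply/rowP => j; rewrite !mxE; ring.
apply: psd_add_diag_unitmx => [v|j].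
  have -> : v *m (Dh *m Om *m Dh) *m v^T = v *m Dh *m Om *m (v *m Dh)^T.
    by rewrite trmx_mul tr_diag_mx !mulmxA.
  have [->|vDh_neq0] := eqVneq (v *m Dh) 0; first by rewrite !mul0mx mxE.
  exact/ltW/(proj2 Om_pd).
have := a_gt0 j; have := s_gt0 j; have := sym_pos_def_diag_gt0 Om_pd j.
move=> Om_gt0 sj_gt0 aj_gt0; have qj_gt0 := Lambda_den_gt0 j.
rewrite mxE (_ : _ - _ = (1 + s 0 j ^+ 2 * (a 0 j + Om j j)) / q j); last first.
  by field; rewrite lt0r_neq0.
by rewrite divr_gt0 // ltr_pwDl // mulr_ge0 ?addr_ge0 ?ltW ?exprn_gt0.
Qed.

Lemma sqrt_diag_mulmx_inv : Dr *m Dh = 1%:M.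
Proof.
rewrite diag_mxM -diag_const_mx; congr diag_mx; apply/rowP => j.
by rewrite !mxE mulfV // gt_eqF // sqrtr_gt0.
Qed.

Lemma pln_hessian_factor :
  pln_hessian a s Om =
  - (block_mx Dr 0 0 Dr
     *m block_mx (1%:M + Dh *m Om *m Dh) Ds Ds (diag_mx (\row_j (lam j)^-1))
     *m block_mx Dr 0 0 Dr).
Proof.
have DhDr : Dh *m Dr = 1%:M by rewrite diag_mxC sqrt_diag_mulmx_inv.
have sqrt_sqr j : Num.sqrt (a 0 j) * Num.sqrt (a 0 j) = a 0 j.
  by rewrite -expr2 sqr_sqrtr // ltW.
rewrite /pln_hessian !mulmx_block !mulmx0 !mul0mx !addr0 !add0r.
congr (- block_mx _ _ _ _).
- rewrite mulmxDr mulmx1 mulmxDl !mulmxA sqrt_diag_mulmx_inv mul1mx.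
  rewrite -mulmxA DhDr mulmx1 diag_mxM; congr (diag_mx _ + _).
  by apply/rowP => j; rewrite !mxE sqrt_sqr.
- rewrite !diag_mxM; congr diag_mx; apply/rowP => j.
  by rewrite !mxE mulrAC sqrt_sqr.
- rewrite !diag_mxM; congr diag_mx; apply/rowP => j.
  by rewrite !mxE mulrAC sqrt_sqr.
rewrite !diag_mxM; congr diag_mx; apply/rowP => j; rewrite !mxE mulrAC sqrt_sqr.
have := a_gt0 j; have := s_gt0 j; have := Lambda_den_gt0 j.
move=> qj_gt0 sj_gt0 aj_gt0.
by field; rewrite !lt0r_neq0.
Qed.

Local Notation C := (invmx (1%:M + Dh *m Om *m Dh - Ds *m Lam *m Ds)).

Lemma invmx_pln_hessian :
  invmx (pln_hessian a s Om) =
  - (block_mx Dh 0 0 Dh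
     *m block_mx C (- (C *m Ds *m Lam)) (- (Lam *m Ds *m C))
                 (Lam + Lam *m Ds *m C *m Ds *m Lam)
     *m block_mx Dh 0 0 Dh).
Proof.
have lam_neq0 j : lam j != 0.
  by rewrite !mulf_neq0 ?invr_neq0 ?expf_neq0 ?lt0r_neq0 ?Lambda_den_gt0.
have block_inv :
    block_mx (1%:M + Dh *m Om *m Dh) Ds Ds (diag_mx (\row_j (lam j)^-1))
    *m block_mx C (- (C *m Ds *m Lam)) (- (Lam *m Ds *m C))
                (Lam + Lam *m Ds *m C *m Ds *m Lam) = 1%:M.
  apply: mulmx_block_schur; last exact: mulmxV schur_unitmx.
  rewrite Lambda_diag diag_mxM -diag_const_mx; congr diag_mx; apply/rowP => j.
  by rewrite !mxE mulVf.
have sqrt_block_inv : block_mx Dr 0 0 Dr *m block_mx Dh 0 0 Dh = 1%:M.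
  rewrite mulmx_block !mulmx0 !mul0mx !addr0 !add0r sqrt_diag_mulmx_inv.
  by rewrite (scalar_mx_block p p 1).
apply: mulmx1_invmx; rewrite pln_hessian_factor mulNmx mulmxN opprK.
move: block_inv sqrt_block_inv.
set M := block_mx (1%:M + _) _ _ _; set N := block_mx C _ _ _.
set E := block_mx Dr 0 0 Dr; set F := block_mx Dh 0 0 Dh => MN1 EF1.
by rewrite -!mulmxA (mulmxA E F) EF1 mul1mx (mulmxA M N) MN1 mul1mx.
Qed.

End PLNHessianInverse.

Theorem proposition8 (R : realType) (p d : nat) (Y : 'I_p -> nat)
  (x : 'rV[R]_d) (o : 'rV[R]_p) (B : 'M[R]_(d, p)) (Om : 'M[R]_p)
  (mi si : 'rV[R]_p) :
  sym_pos_def Om ->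
  (forall j, 0 < si 0 j) ->
  let a := atilde x o B mi si in
  let Da := diag_mx a in
  let Dh := diag_mx (\row_j (Num.sqrt (a 0 j))^-1) in
  let Ds := diag_mx si in
  let OmD := diag_mx (\row_j Om j j) in
  let Lam := invmx (1%:M + Ds *m Ds *m (Da + Da *m Ds *m Ds + OmD))
             *m Da *m Ds *m Ds in
  let C := invmx (1%:M + Dh *m Om *m Dh - Ds *m Lam *m Ds) in
  invmx (hessian (elbo_i Y x o B Om) (row_mx mi si)) =
  - (block_mx Dh 0 0 Dh
     *m block_mx C (- (C *m Ds *m Lam)) (- (Lam *m Ds *m C))
                 (Lam + Lam *m Ds *m C *m Ds *m Lam)
     *m block_mx Dh 0 0 Dh).
Proof.
move=> Om_pd s_gt0 a Da Dh Ds OmD Lam C.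
have a_gt0 j : 0 < a 0 j by rewrite mxE expR_gt0.
rewrite hessian_elbo_i ?row_mxKl ?row_mxKr //; last exact: proj1 Om_pd.
exact: invmx_pln_hessian.
Qed.
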